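(* Let $G$ be a finite group and let $R\colon\mathcal{I}_G\text{-spaces}\to\mathcal{I}\text{-}G\text{spaces}$ be restriction along $\iota\colon\mathcal{I}\to\mathcal{I}_G$, with left adjoint $E$ given by left Kan extension along $\iota$. Then the counit $\epsilon\colon ER\to\mathrm{Id}_{\mathcal{I}_G\text{-spaces}}$ is a natural isomorphism.
   Context: $\mathcal{I}_G$: objects $(\mathbb{R}^n,\rho)$, $\rho\colon G\to O(n)$ a homomorphism; morphisms all linear isometric isomorphisms, with disjoint basepoint and conjugation $G$-action. $\mathcal{T}op_G$: based $G$-spaces and all based maps with conjugation $G$-action. An $\mathcal{I}_G$-space is a $G$-continuous functor $\mathcal{I}_G\to\mathcal{T}op_G$ (i.e. $A(gfg^{-1})=gA(f)g^{-1}$), with morphisms the natural transformations having $G$-equivariant components. $\mathcal{I}=\mathcal{I}_e$; $\iota\colon\mathcal{I}\to\mathcal{I}_G$ gives $\mathbb{R}^n$ the trivial action. An $\mathcal{I}$-$G$space is a continuous functor from $\mathcal{I}$ to based $G$-spaces and equivariant maps. For an $\mathcal{I}$-$G$space $X$ and $V\in\mathcal{I}_G$, $EX(V)=\coprod_n\mathcal{I}_G(\mathbb{R}^n,V)\times X(\mathbb{R}^n)/\sim$, where $[st,x]\sim[s,t_*x]$ for $t$ a morphism of $\mathcal{I}$, with diagonal $G$-action. For an $\mathcal{I}_G$-space $A$, the counit component $\epsilon_A\colon ERA(V)\to A(V)$ is $[s,a]\mapsto s_*a=A(s)(a)$. *)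

From HB Require Import structures.
From mathcomp Require Import all_boot all_order all_algebra fingroup.
From mathcomp Require Import generic_quotient.
From mathcomp Require Import all_classical all_reals topology.
From Stdlib Require Import Relation_Operators.

Set Implicit Arguments.
Unset Strict Implicit.
Unset Printing Implicit Defensive.

Import Order.TTheory GRing.Theory Num.Theory.
Import numFieldTopology.Exports.
Local Open Scope classical_set_scope.
Local Open Scope ring_scope.
Local Open Scope quotient_scope.

Section IG.
Variables (R : realType) (gT : finGroupType).

(* Linear isometric isomorphisms R^n -> R^m, as matrices acting on column
   vectors: f^T f = 1 (isometry) and f f^T = 1 (surjective). *)
Definition lin_iso m n (f : 'M[R]_(m, n)) : Prop :=
  f^T *m f = 1%:M /\ f *m f^T = 1%:M.

Lemma lin_iso1 n : lin_iso (1%:M : 'M[R]_n).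
Proof. by rewrite /lin_iso trmx1 mulmx1. Qed.

Lemma lin_isoM m n p (s : 'M[R]_(m, n)) (t : 'M[R]_(n, p)) :
  lin_iso s -> lin_iso t -> lin_iso (s *m t).
Proof.
move=> [s1 s2] [t1 t2]; split; rewrite trmx_mul.
  by rewrite mulmxA -(mulmxA _ _ s) s1 mulmx1 t1.
by rewrite mulmxA -(mulmxA _ t) t2 mulmx1 s2.
Qed.

Definition orth_rep n (rho : gT -> 'M[R]_n) : Prop :=
  (forall g, rho g *m (rho g)^T = 1%:M) /\
  (forall g h, rho (g * h)%g = rho g *m rho h).

Lemma orth_rep_iso n (rho : gT -> 'M[R]_n) g : orth_rep rho -> lin_iso (rho g).
Proof. by move=> [o _]; split => //; exact: mulmx1C. Qed.

(* Objects of I_G : (R^n, rho). *)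
Record IGobj := MkIGobj {
  odim : nat;
  rep : gT -> 'M[R]_odim;
  rep_ok : orth_rep rep }.

Lemma triv_rep_ok n : orth_rep (fun _ : gT => (1%:M : 'M[R]_n)).
Proof. by split => [g|g h]; rewrite ?trmx1 mulmx1. Qed.

(* iota : I -> I_G, R^n with the trivial action. *)
Definition triv n : IGobj := @MkIGobj n (fun _ => 1%:M) (triv_rep_ok n).

Definition Hom (m n : nat) : Type := set_type [set f : 'M[R]_(m, n) | lin_iso f].
HB.instance Definition _ m n :=
  Topological.copy (Hom m n) (set_type [set f : 'M[R]_(m, n) | lin_iso f]).

Definition mkHom m n (f : 'M[R]_(m, n)) (H : lin_iso f) : Hom m n :=
  SigSub (mem_set (H : [set f | lin_iso f] f)).

Lemma Hom_iso m n (s : Hom m n) : lin_iso (set_val s).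
Proof. exact: set_mem (valP s). Qed.

(* I_G-spaces: G-continuous (continuously enriched) functors I_G -> Top_G. *)
Unset Implicit Arguments.
Record IGspace := MkIGspace {
  Asp : IGobj -> topologicalType;
  Abpt : forall V, Asp V;
  Aact : forall V, gT -> Asp V -> Asp V;
  Amap : forall V W, 'M[R]_(odim W, odim V) -> Asp V -> Asp W;
  gact_cont : forall V g, continuous (Aact V g);
  gact1 : forall V x, Aact V 1%g x = x;
  gactM : forall V g h x, Aact V (g * h)%g x = Aact V g (Aact V h x);
  gact_bpt : forall V g, Aact V g (Abpt V) = Abpt V;
  fmap_bpt : forall V W (f : 'M[R]_(odim W, odim V)), lin_iso f ->
      Amap V W f (Abpt V) = Abpt W;
  fmap_cont : forall V W,
      continuous (fun p : Hom (odim W) (odim V) * Asp V => Amap V W (set_val p.1) p.2);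
  fmap_id : forall V x, Amap V V 1%:M x = x;
  fmap_comp : forall U V W (f : 'M[R]_(odim W, odim V)) (h : 'M[R]_(odim V, odim U)) x,
      lin_iso f -> lin_iso h -> Amap U W (f *m h) x = Amap V W f (Amap U V h x);
  fmap_G : forall V W g (f : 'M[R]_(odim W, odim V)) x, lin_iso f ->
      Amap V W (rep W g *m f *m rep V (g^-1)%g) x
      = Aact W g (Amap V W f (Aact V (g^-1)%g x)) }.

(* I-G spaces: functors from I to based G-spaces and equivariant maps.
   Here only their data is recorded (the construction E only uses the data). *)
Record IGdata := MkIGdata {
  isp : nat -> topologicalType;
  ipt : forall n, isp n;
  igact : forall n, gT -> isp n -> isp n;
  imap : forall n m, 'M[R]_(m, n) -> isp n -> isp m }.

Set Implicit Arguments.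

Definition Res (A : IGspace) : IGdata :=
  @MkIGdata (fun n => Asp A (triv n)) (fun n => Abpt A (triv n))
    (fun n => Aact A (triv n)) (fun n m => Amap A (triv n) (triv m)).

(* E : left Kan extension along iota, EX(V) = coprod_n I_G(R^n,V) x X(R^n) / ~ *)
Section E.
Variables (X : IGdata) (V : IGobj).

Definition Epre : topologicalType := {n : nat & (Hom (odim V) n * isp X n)%type}.

(* generating relation [s t, x] ~ [s, t_* x] for t : R^n -> R^m in I *)
Definition Estep (a b : Epre) : Prop :=
  exists (m n : nat) (s : Hom (odim V) m) (t : 'M[R]_(m, n)) (x : isp X n)
         (Hst : lin_iso (set_val s *m t)),
    lin_iso t /\
    a = existT _ n (mkHom Hst, x) /\
    b = existT _ m (s, @imap X n m t x).

Definition Erel' (a b : Epre) : bool := `[< clos_refl_sym_trans _ Estep a b >].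

Lemma Erel_refl : reflexive Erel'.
Proof. by move=> a; apply/asboolP; exact: rst_refl. Qed.
Lemma Erel_sym : symmetric Erel'.
Proof.
move=> a b; apply/asboolP/asboolP; exact: rst_sym.
Qed.
Lemma Erel_trans : transitive Erel'.
Proof.
move=> b a c /asboolP Hab /asboolP Hbc; apply/asboolP; exact: rst_trans Hab Hbc.
Qed.

Definition Erel := EquivRel Erel' Erel_refl Erel_sym Erel_trans.

Definition EX := {eq_quot Erel}.
HB.instance Definition _ := Topological.copy EX (quotient_topology EX).
HB.instance Definition _ := Quotient.on EX.

Definition Ebpt : EX :=
  \pi_EX (existT _ (odim V) (mkHom (@lin_iso1 (odim V)), ipt X (odim V))).

(* diagonal G-action [s, x] |-> [g s g^-1, g x] = [rho_V(g) s, g x] *)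
Definition Egact (g : gT) (q : EX) : EX :=
  let: existT n (s, x) := repr q in
  \pi_EX (existT _ n (mkHom (lin_isoM (orth_rep_iso g (rep_ok V)) (Hom_iso s)),
     @igact X n g x)).
End E.

Definition Emap (X : IGdata) (V W : IGobj) (f : 'M[R]_(odim W, odim V))
    (Hf : lin_iso f) (q : EX X V) : EX X W :=
  let: existT n (s, x) := repr q in
  \pi_(EX X W) (existT _ n (mkHom (lin_isoM Hf (Hom_iso s)), x)).

Definition counit (A : IGspace) (V : IGobj) (q : EX (Res A) V) : Asp A V :=
  let: existT n (s, a) := repr q in Amap A (triv n) V (set_val s) a.
End IG.

Arguments Asp {R gT} _ _.
Arguments Abpt {R gT} _ _.
Arguments Aact {R gT} _ _ _ _.
Arguments Amap {R gT} _ _ _ _ _.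
Arguments counit {R gT} A V q.
Arguments Ebpt {R gT} X V.
Arguments Egact {R gT X V} g q.
Arguments Emap {R gT X V W f} Hf q.

(** The counit [[s, a]] |-> A(s)(a) is well defined because the relation of
    ERA(V) is generated by [[s t, a] ~ [s, t_* a]] and A is a functor.  Its
    inverse sends a to the class of [[1, A(1) a]], where [1 : R^k -> V] is
    the identity matrix read as a morphism of I_G out of the trivial
    representation [R^k] (k = dim V); it is not equivariant, but I_G contains
    all linear isometries.  Every class [[s, x]] equals [[1, A(s) x]] by the
    generating relation with [t := s], and continuity on both sides follows
    from the joint continuity of [A] on morphisms and points. *)

From Pilot Require Import Defs.
From HB Require Import structures.
From mathcomp Require Import all_boot all_order all_algebra fingroup.
From mathcomp Require Import generic_quotient.
From mathcomp Require Import all_classical all_reals topology.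
From Stdlib Require Import Relation_Operators.
From mathcomp Require Import unstable.

Local Open Scope classical_set_scope.
Local Open Scope ring_scope.
Local Open Scope quotient_scope.

Lemma continuous_pairl (T U : topologicalType) (u : U) :
  continuous (fun x : T => (u, x)).
Proof. by move=> x; apply: cvg_pair; [exact: cvg_cst | exact: cvg_id]. Qed.

Section Counit.
Variables (R : realType) (gT : finGroupType) (A : IGspace R gT) (V : IGobj R gT).

Local Notation ERA := (EX (Res A) V).
Local Notation k := (odim V).

Definition counit_rep (e : Epre (Res A) V) : Asp A V :=
  let: existT n (s, a) := e in Amap A (triv R gT n) V (set_val s) a.

Lemma counitE q : counit A V q = counit_rep (repr q).
Proof. by rewrite /counit; case: (repr q) => n [s a]. Qed.

Lemma counit_rep_step a b : Estep a b -> counit_rep a = counit_rep b.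
Proof.
move=> [m [n [s [t [x [Hst [Ht [-> ->]]]]]]]] /=.
rewrite (@Defs.fmap_comp R gT A (triv R gT n) (triv R gT m)) //.
exact: Hom_iso.
Qed.

Lemma counit_rep_rel a b : Erel' a b -> counit_rep a = counit_rep b.
Proof.
move=> /asboolP; elim => [x y|x|x y _ ->|x y z _ -> _ ->] //.
exact: counit_rep_step.
Qed.

Lemma counit_pi e : counit A V (\pi_ERA e) = counit_rep e.
Proof.
by rewrite counitE; apply: counit_rep_rel; apply/(eqquotP ERA); rewrite reprK.
Qed.

Definition Hom1 : Defs.Hom R k k := mkHom (@lin_iso1 R k).

Definition counit_inv (a : Asp A V) : ERA :=
  \pi_ERA (existT _ k (Hom1, Amap A V (triv R gT k) 1%:M a)).

Lemma counit_invK : cancel (counit A V) counit_inv.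
Proof.
move=> q; rewrite -[q]reprK; case: (repr q) => n [s x].
rewrite counit_pi /counit_inv /=.
rewrite -(@Defs.fmap_comp R gT A (triv R gT n) V (triv R gT k)); last 2 first.
- exact: lin_iso1.
- exact: Hom_iso.
rewrite mul1mx; apply/(eqquotP ERA)/asboolP; apply/rst_sym/rst_step.
have H1s : lin_iso (set_val Hom1 *m set_val s) by rewrite mul1mx; exact: Hom_iso.
exists k, n, Hom1, (set_val s), x, H1s; split; first exact: Hom_iso.
by split=> //; congr existT; congr pair; apply: val_inj; rewrite /= mul1mx.
Qed.

Lemma counitK : cancel counit_inv (counit A V).
Proof.
move=> a; rewrite /counit_inv counit_pi /=.
rewrite -(@Defs.fmap_comp R gT A V (triv R gT k) V) ?mul1mx ?fmap_id //.
all: exact: lin_iso1.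
Qed.

Lemma counit_continuous : continuous (counit A V).
Proof.
apply/quotient_continuous.
have -> : counit A V \o \pi_ERA =
    sigT_fun (fun n (p : (Defs.Hom R k n * isp R gT (Res A) n)%type) =>
      Amap A (triv R gT n) V (set_val p.1) p.2).
  by apply: funext => -[n [s x]] /=; rewrite counit_pi.
by apply: sigT_continuous => n; exact: (@fmap_cont R gT A (triv R gT n) V).
Qed.

Lemma counit_inv_continuous : continuous counit_inv.
Proof.
have cA : continuous (Amap A V (triv R gT k) 1%:M).
  move=> a; apply: (continuous_comp (f := fun a => (Hom1, a))
    (g := fun p : (Defs.Hom R k k * Asp A V)%type =>
      Amap A V (triv R gT k) (set_val p.1) p.2)).
    exact: continuous_pairl.
  exact: (@fmap_cont R gT A V (triv R gT k)).
move=> a; apply: (continuous_comp (g := \pi_ERA)); last exact: pi_continuous.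
apply: (continuous_comp (g := existT _ k)); last exact: existT_continuous.
by apply: continuous_comp; [exact: cA | exact: continuous_pairl].
Qed.

Lemma counit_bpt : counit A V (Ebpt (Res A) V) = Abpt A V.
Proof. by rewrite /Ebpt counit_pi /= fmap_bpt //; exact: lin_iso1. Qed.

(* The action on the trivial representation is absorbed by G-continuity of A:
   [A(rho_V(g) s) = g A(s) g^-1] since [rho(g^-1) = 1] on [R^n]. *)
Lemma counit_gact g q : counit A V (Egact g q) = Aact A V g (counit A V q).
Proof.
rewrite /Egact [in RHS]counitE; case: (repr q) => n [s x]; rewrite counit_pi /=.
have := @fmap_G R gT A (triv R gT n) V g (set_val s)
  (Aact A (triv R gT n) g x) (Hom_iso s).
by rewrite /= mulmx1 -gactM mulVg gact1.
Qed.

End Counit.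

Lemma counit_natural (R : realType) (gT : finGroupType) (A : IGspace R gT)
    (V W : IGobj R gT) (f : 'M[R]_(odim W, odim V)) (Hf : lin_iso f) q :
  counit A W (Emap Hf q) = Amap A V W f (counit A V q).
Proof.
rewrite /Emap [in RHS]counitE; case: (repr q) => n [s x]; rewrite counit_pi /=.
by apply: Defs.fmap_comp => //; exact: Hom_iso.
Qed.

Theorem lemmaA6 (R : realType) (gT : finGroupType) (A : IGspace R gT) :
  forall V : IGobj R gT,
    (exists inv : Asp A V -> EX (Res A) V,
        cancel (counit A V) inv /\ cancel inv (counit A V) /\
        continuous (counit A V) /\ continuous inv) /\
    counit A V (Ebpt (Res A) V) = Abpt A V /\
    (forall (g : gT) (q : EX (Res A) V),
        counit A V (Egact g q) = Aact A V g (counit A V q)) /\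
    (forall (W : IGobj R gT) (f : 'M[R]_(odim W, odim V)) (Hf : lin_iso f)
            (q : EX (Res A) V),
        counit A W (Emap Hf q) = Amap A V W f (counit A V q)).
Proof.
move=> V; split; last split; [|exact: counit_bpt|split].
- exists (counit_inv _ _ A V).
  split; first exact: counit_invK.
  split; first exact: counitK.
  by split; [exact: counit_continuous | exact: counit_inv_continuous].
- exact: counit_gact.
- exact: counit_natural.
Qed.
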